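(* Let $m\ge1$ be an integer and write $s_n=s_n^{(m+1,m+2)}$. Then for all $n\ge0$, \[ s_n^2=\delta_{n,0}+s_{n-m-1}^2+s_{n-m-2}^2+2\sum_{l=2m+3}^n P_{l-2m-3}^{\{-2,m-1,m\}}s_{n-l}^2 . \]
   Context: For positive integers $p<q$, $s_n^{(p,q)}$ is defined by $s_n^{(p,q)}=\delta_{0,n}+s_{n-p}^{(p,q)}+s_{n-q}^{(p,q)}$ for $n\ge0$ and $s_n^{(p,q)}=0$ for $n<0$. $\delta_{i,j}$ is $1$ if $i=j$ and $0$ otherwise. For a finite set $W$ of integers, $P_n^W$ is the number of permutations $\pi$ of $\{1,\dots,n\}$ with $\pi(i)-i\in W$ for all $i$ (the permanent of the $n\times n$ $(0,1)$ Toeplitz matrix whose $(i,j)$ entry is $1$ iff $j-i\in W$), with $P_0^W=1$. Empty sums are $0$. *)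

From mathcomp Require Import all_boot all_order all_algebra all_fingroup.
Set Implicit Arguments. Unset Strict Implicit. Unset Printing Implicit Defensive.
Import GRing.Theory Num.Theory.

Fixpoint s_fuel (p q k n : nat) : nat :=
  match k with
  | 0 => 0
  | k'.+1 => (n == 0%N) + (if (p <= n)%N then s_fuel p q k' (n - p) else 0)
                        + (if (q <= n)%N then s_fuel p q k' (n - q) else 0)
  end.

(* s^{(p,q)}_n for an integer index n; 0 for n < 0.
   Fuel n.+1 suffices whenever p >= 1. *)
Definition sseq (p q : nat) (n : int) : nat :=
  match n with
  | Posz k => s_fuel p q k.+1 k
  | Negz _ => 0
  end.

Definition Pperm (W : seq int) (n : nat) : nat :=
  #|[set s : 'S_n | [forall i : 'I_n, (Posz (s i) - Posz (i : nat))%R \in W]]|.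

(* Repeatedly unfolding the factor s_N of a
   product s_N s_{N-v} by s_N = s_{N-m-1} + s_{N-m-2} expresses every product
   s_{N-u} s_{N-v} (u <> v, u, v <= m+1) through squares s_{N-j-m-2}^2 whose
   coefficients nfill m j u v satisfy a transfer recursion in the offsets
   (u, v).  The same recursion counts permutations with displacements in
   {-2, m-1, m} built value by value: once pi(0), ..., pi(i-1) are chosen they
   cover [-2, i-2) together with exactly two more positions i-2+u and i-2+v,
   starting from (u, v) = (0, 1) with -2 and -1 regarded as covered.  Squaring
   s_n = s_{n-m-1} + s_{n-m-2} leaves the cross term s_{n-m-1} s_{n-m-2}, which
   is the case (u, v) = (0, 1). *)

From mathcomp Require Import all_boot all_order all_algebra all_fingroup.
From mathcomp Require Import zify.
Set Implicit Arguments. Unset Strict Implicit. Unset Printing Implicit Defensive.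
Import GRing.Theory Num.Theory.

Lemma s_fuelS p q f n : s_fuel p q f.+1 n = (n == 0)
  + (if p <= n then s_fuel p q f (n - p) else 0)
  + (if q <= n then s_fuel p q f (n - q) else 0).
Proof. by []. Qed.

Lemma s_fuel_stable p q f n : 0 < p -> 0 < q -> n < f ->
  s_fuel p q f.+1 n = s_fuel p q f n.
Proof.
move=> p0 q0; elim: f n => [|f IH] n // nf.
rewrite [LHS]s_fuelS [RHS]s_fuelS.
by case: (leqP p n) => pn; case: (leqP q n) => qn; rewrite ?IH //; lia.
Qed.

Lemma s_fuel_enough p q f n : 0 < p -> 0 < q -> n < f ->
  s_fuel p q f n = s_fuel p q n.+1 n.
Proof.
move=> p0 q0 nf; rewrite -(subnK nf); elim: (f - n.+1) => [|k IH] //.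
by rewrite addSn s_fuel_stable // ?IH //; lia.
Qed.

Lemma sseq_subz p q n d :
  sseq p q (Posz n - Posz d)%R = if d <= n then sseq p q (n - d)%N else 0.
Proof.
case: leqP => dn; first by rewrite subzn.
by case E: (Posz n - Posz d)%R => [k|k] //; lia.
Qed.

Lemma sseq_rec p q (n : nat) : 0 < p -> 0 < q ->
  sseq p q n = (n == 0) + sseq p q (Posz n - Posz p)%R + sseq p q (Posz n - Posz q)%R.
Proof.
move=> p0 q0; rewrite !sseq_subz /=.
by case: leqP => pn; case: leqP => qn; rewrite ?(@s_fuel_enough p q n) //; lia.
Qed.

Definition sd m N d := sseq m.+1 m.+2 (Posz N - Posz d)%R.

Lemma sdSS m N d : sd m N.+1 d.+1 = sd m N d.
Proof. by rewrite /sd; congr sseq; lia. Qed.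

Lemma sd_gt m N d : N < d -> sd m N d = 0.
Proof. by move=> Nd; rewrite /sd sseq_subz leqNgt Nd. Qed.

Lemma sd_succ m N : sd m N.+1 0 = sd m N m + sd m N m.+1.
Proof. by rewrite /sd subr0 sseq_rec // add0n; congr (sseq _ _ _ + sseq _ _ _); lia. Qed.

(* Number of ways to append j more displacements to a partial word in state
   (u, v): beyond the fully covered initial segment, exactly the positions at
   offsets u and v are covered. *)
Fixpoint nfill (m j u v : nat) {struct j} : nat :=
  match j with
  | 0 => ((u == 0) && (v == 1)) || ((u == 1) && (v == 0))
  | j'.+1 => if u == 0 then (if v != m.+1 then nfill m j' m v.-1 else 0)
                           + (if v != m.+2 then nfill m j' m.+1 v.-1 else 0)
             else if v == 0 then (if u != m.+1 then nfill m j' u.-1 m else 0)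
                           + (if u != m.+2 then nfill m j' u.-1 m.+1 else 0)
             else nfill m j' u.-1 v.-1
  end.

Lemma nfillC m j u v : nfill m j u v = nfill m j v u.
Proof.
elim: j u v => [|j IH] u v /=; first by case: u => [|[|u]]; case: v => [|[|v]].
by case: u => [|u]; case: v => [|v] //=; rewrite ?(IH m) ?(IH m.+1) ?(IH u).
Qed.

Section ProductExpansion.

Variable m : nat.
Hypothesis m_gt0 : 0 < m.

Definition expansion N u v :=
  \sum_(j < N.+1) nfill m j u v * sd m N (j + m.+2) ^ 2
  + (((u == 0) && (v == m.+1)) || ((u == m.+1) && (v == 0))) * sd m N m.+1 ^ 2.

Definition expands N := forall u v, u != v -> u <= m.+1 -> v <= m.+1 ->
  sd m N u * sd m N v = expansion N u v.

Lemma expands0 : expands 0.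
Proof.
move=> u v uv um vm; rewrite /expansion big_ord1 (@sd_gt m 0 (0 + m.+2)) // (@sd_gt m 0 m.+1) //.
rewrite exp0n // !muln0.
by move: uv um vm; case: u => [|u]; case: v => [|v] // _ _ _; rewrite ?sd_gt ?muln0.
Qed.

Lemma expandsS0 N : expands N -> forall v, 0 < v -> v <= m.+1 ->
  sd m N.+1 0 * sd m N.+1 v = expansion N.+1 0 v.
Proof.
move=> IH [//|v] _ v_le; have v_m2 : v.+1 != m.+2 by lia.
rewrite /expansion big_ord_recl /= sd_succ !sdSS mulnDl.
under eq_bigr => j _ do rewrite /bump add1n addSn sdSS v_m2 mulnDl /= add0n.
rewrite big_split /= !orbF !eqSS.
rewrite (IH m.+1 v (negbT (gtn_eqF v_le)) (leqnn _) (ltnW v_le)) /expansion eqxx /=.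
case: (ltngtP v m) => [v_lt | m_lt | ->]; last first.
- under [X in _ = _ + (X + _) + _]eq_bigr => j _ do rewrite mul0n.
  by rewrite big1_eq /= (gtn_eqF m_gt0) !mul0n !add0n !addn0 mul1n mulnn addnC.
- by exfalso; lia.
rewrite (IH m v (negbT (gtn_eqF v_lt)) (leqnSn m) (ltnW v_le)) /expansion /=.
by rewrite (gtn_eqF m_gt0) (ltn_eqF (ltnSn m)) /= !mul0n !addn0 addnA [RHS]addnC.
Qed.

Lemma sd_mul_expansion N : expands N.
Proof.
elim: N => [|N IH]; first exact: expands0.
move=> u v; case: u => [|u]; case: v => [|v] // uv um vm.
- exact: (expandsS0 IH).
- rewrite mulnC (expandsS0 IH) // /expansion /=; under eq_bigr => j _ do rewrite nfillC.
  by rewrite andbT orbF.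
- rewrite !sdSS (IH u v) ?(ltnW um) ?(ltnW vm) // /expansion (ltn_eqF um) (ltn_eqF vm).
  rewrite [in RHS]big_ord_recl /= !andbF !mul0n !addn0 add0n.
  by apply: eq_bigr => j _; rewrite /bump /= sdSS.
Qed.

End ProductExpansion.

Lemma sd_mul_sd_succ m N : 0 < m ->
  sd m N m * sd m N m.+1 =
  \sum_(2 * m + 3 <= l < N.+2) nfill m (l - (2 * m + 3)) 0 1 * sd m N.+1 l ^ 2.
Proof.
move=> m_gt0; case: (ltnP N m) => [N_lt | m_le].
  by rewrite big_geq ?sd_gt ?mul0n //; lia.
have [M ->] : exists M, N = M + m by exists (N - m); rewrite subnK.
have -> : sd m (M + m) m = sd m M 0 by rewrite /sd; congr sseq; lia.
have -> : sd m (M + m) m.+1 = sd m M 1 by rewrite /sd; congr sseq; lia.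
rewrite (sd_mul_expansion m_gt0) // /expansion /= orbF eqSS eq_sym (gtn_eqF m_gt0) addn0.
rewrite -(big_mkord xpredT (fun j => nfill m j 0 1 * sd m M (j + m.+2) ^ 2)).
rewrite -[in RHS](add0n (2 * m + 3)) big_addn !add0n.
rewrite (big_cat_nat _ (n := (M + m).+2 - (2 * m + 3))) //=; last by lia.
rewrite [X in _ + X]big_nat_cond [X in _ + X]big1 ?addn0 => [|j /andP[/andP[j_ge _] _]].
  apply: eq_big_nat => j _; rewrite addnK; congr (_ * _ ^ 2).
  by rewrite /sd; congr sseq; lia.
by rewrite sd_gt ?exp0n ?muln0 //; lia.
Qed.

Lemma perm_swap2 (T : eqType) (x y : T) : perm_eq [:: x; y] [:: y; x].
Proof. by apply/seq.permP => a /=; rewrite addnCA. Qed.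

Lemma perm_eq2 (T : eqType) (x y c d : T) :
  perm_eq [:: x; y] [:: c; d] = ((x == c) && (y == d)) || ((x == d) && (y == c)).
Proof.
apply/idP/orP => [xy_cd|[]/andP[/eqP-> /eqP->] //]; last exact: perm_swap2.
have := perm_mem xy_cd x; rewrite !inE eqxx /= => /esym/orP[]/eqP x_eq; subst x.
  by move: xy_cd; rewrite perm_cons => /perm_mem/(_ y); rewrite !inE eqxx => <-; rewrite eqxx; left.
move: (perm_trans xy_cd (perm_swap2 c d)); rewrite /= perm_cons.
by move=> /perm_mem/(_ y); rewrite !inE eqxx => <-; rewrite eqxx; right.
Qed.

Lemma perm_map_enum (T : finType) (s : {perm T}) : perm_eq (map s (enum T)) (enum T).
Proof.
apply: uniq_perm; rewrite ?enum_uniq ?(map_inj_uniq (@perm_inj _ s)) ?enum_uniq // => i.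
by rewrite mem_enum; apply/mapP; exists (s^-1 i)%g; rewrite ?mem_enum ?permKV.
Qed.

Fixpoint words (W : seq int) k : seq (seq int) :=
  if k is k'.+1 then [seq w :: q | w <- W, q <- words W k'] else [:: [::]].

Lemma count_wordsS W k (P : pred (seq int)) :
  count P (words W k.+1) = \sum_(w <- W) count (fun q => P (w :: q)) (words W k).
Proof. by rewrite /= count_flatten sumnE !big_map; apply: eq_bigr => w _; rewrite count_map. Qed.

Lemma mem_words W k ws : (ws \in words W k) = (size ws == k) && all (mem W) ws.
Proof.
elim: k ws => [|k IH] [|w ws] //=.
- by apply/negbTE/allpairsP => -[[a b] /= [_ _ ]].
- apply/allpairsP/idP => [[[a b] /= [aW bA [-> ->]]]|/and3P[sws wW aws]].
    by rewrite eqSS aW -(IH b) bA.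
  by exists (w, ws); rewrite /= wW IH -eqSS sws aws.
Qed.

Lemma uniq_words W k : uniq W -> uniq (words W k).
Proof.
move=> uW; elim: k => [|k IH] //=.
by apply: allpairs_uniq => // -[a b] [c d] _ _ /= [-> ->].
Qed.

Lemma words_ge W k : all (fun w => -2 <= w)%R W ->
  {in words W k, forall q, all (fun w => -2 <= w)%R q}.
Proof. by move=> /allP W_ge q; rewrite mem_words => /andP[_]; apply: sub_all. Qed.

Definition shifts m : seq int := [:: (-2)%R; (Posz m - 1)%R; Posz m].

Lemma shifts_ge m : all (fun w => -2 <= w)%R (shifts m).
Proof. by rewrite /= !andbT; lia. Qed.

Fixpoint targets (j : nat) (ws : seq int) : seq int :=
  if ws is w :: ws' then (Posz j + w)%R :: targets j.+1 ws' else [::].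

Lemma size_targets j ws : size (targets j ws) = size ws.
Proof. by elim: ws j => //= w ws IH j; rewrite IH. Qed.

Lemma nth_targets j ws k : k < size ws ->
  nth 0%R (targets j ws) k = (Posz (j + k) + nth 0%R ws k)%R.
Proof.
elim: ws j k => [|w ws IH] j [|k] //= k_lt; first by rewrite addn0.
by rewrite IH // addSnnS.
Qed.

Lemma targets_cat j p q : targets j (p ++ q) = targets j p ++ targets (j + size p) q.
Proof. by elim: p j => [|w p IH] j /=; rewrite ?addn0 // IH addnS. Qed.

Lemma targets_addn k j ws : targets (k + j) ws = [seq (t + Posz k)%R | t <- targets j ws].
Proof. by elim: ws j => [|w ws IH] j //=; rewrite -addnS IH; congr (_ :: _); lia. Qed.

Lemma targets_ge j ws : all (fun w => -2 <= w)%R ws ->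
  all (fun t => Posz j - 2 <= t)%R (targets j ws).
Proof.
elim: ws j => [|w ws IH] j //= /andP[w_ge ws_ge]; apply/andP; split; first lia.
by apply: sub_all (IH j.+1 ws_ge) => t /=; lia.
Qed.

Lemma targets_map n (G : 'I_n -> int) (L : seq 'I_n) j : map val L = iota j (size L) ->
  targets j [seq (G i - Posz i)%R | i <- L] = map G L.
Proof.
elim: L j => [|i L IH] j //= [i_j L_j]; rewrite IH // i_j; congr (_ :: _); lia.
Qed.

Definition window i : seq int := map Posz (iota 0 i).

Lemma size_window i : size (window i) = i.
Proof. by rewrite size_map size_iota. Qed.

Lemma window_S i : window i.+1 = rcons (window i) (Posz i).
Proof. by rewrite /window -addn1 iotaD map_cat cats1. Qed.

Lemma mem_window i (t : int) : (t \in window i) = (0 <= t < Posz i)%R.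
Proof.
apply/mapP/idP => [[j]|t_in]; first by rewrite mem_iota => j_lt ->; lia.
by exists `|t|%N; rewrite ?mem_iota; lia.
Qed.

Lemma uniq_window i : uniq (window i).
Proof. by rewrite map_inj_uniq ?iota_uniq // => a b []. Qed.

(* Positions are shifted by 2: letter i of [ws] covers i + 2 + w_i, and the
   two phantom positions 0 and 1 stand for the values -2 and -1. *)
Definition covered ws : seq int := 0%R :: 1%R :: targets 2 ws.

Lemma size_covered ws : size (covered ws) = (size ws).+2.
Proof. by rewrite /= size_targets. Qed.

Lemma covered_cat p q : covered (p ++ q) = covered p ++ targets (size p).+2 q.
Proof. by rewrite /covered targets_cat. Qed.

Lemma covered_rcons p w : covered (rcons p w) = rcons (covered p) (Posz (size p).+2 + w)%R.
Proof. by rewrite -cats1 covered_cat cats1. Qed.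

Definition fills n ws := perm_eq (covered ws) (window n.+2).

Lemma fillsE n ws : fills n ws = perm_eq (targets 0 ws) (window n).
Proof.
rewrite /fills /covered /window /= !perm_cons.
rewrite -[targets 2 ws]/(targets (2 + 0) ws) -[iota 2 n]/(iota (2 + 0) n) targets_addn iotaDl.
rewrite -map_comp (eq_map (g := (fun t => t + 2)%R \o Posz)) => [|i /=]; last lia.
rewrite map_comp; apply/idP/idP => [|/(perm_map (fun t => t + 2)%R)] //.
exact/perm_map_inj/addIr.
Qed.

Definition profile p u v :=
  perm_eq (covered p) (window (size p) ++ [:: Posz (size p + u); Posz (size p + v)]).

Lemma profileC p u v : profile p u v -> profile p v u.
Proof. by move=> G; apply: perm_trans G _; rewrite perm_cat2l perm_swap2. Qed.

Lemma profile_rcons p u v w u' v' : profile p u v ->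
  perm_eq [:: Posz (size p + u); Posz (size p + v); (Posz (size p).+2 + w)%R]
          [:: Posz (size p); Posz (size p + u').+1; Posz (size p + v').+1] ->
  profile (rcons p w) u' v'.
Proof.
move=> G uvw; rewrite /profile covered_rcons size_rcons window_S -!cats1 -!catA.
by apply: perm_trans (perm_cat G (perm_refl _)) _; rewrite -catA perm_cat2l !addSn.
Qed.

Lemma profile_rcons0 p v w u' : profile p 0 v -> 0 < v -> (w + 1)%R = Posz u' ->
  profile (rcons p w) u' v.-1.
Proof.
move=> G v_gt0 w_u'; apply: profile_rcons G _; rewrite addn0 perm_cons.
have -> : Posz (size p + v) = Posz (size p + v.-1).+1 by lia.
have -> : (Posz (size p).+2 + w)%R = Posz (size p + u').+1 by lia.
exact: perm_swap2.
Qed.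

Lemma profile_rcons_fill p u v : profile p u.+1 v.+1 -> profile (rcons p (-2)%R) u v.
Proof.
move=> G; apply: profile_rcons G _; rewrite !addnS.
have -> : (Posz (size p).+2 + (-2))%R = Posz (size p) by lia.
by apply/seq.permP => a /=; lia.
Qed.

Lemma fills_cat_mem n p q x : fills n (p ++ q) -> all (fun w => -2 <= w)%R q ->
  (0 <= x)%R -> (x < Posz (size p))%R -> x \in covered p.
Proof.
move=> F q_ge x_ge x_lt; have sz := perm_size F.
rewrite size_covered size_window size_cat in sz.
have /allP q_far := targets_ge (size p).+2 q_ge.
have := perm_mem F x; rewrite mem_window covered_cat mem_cat.
case: (boolP (x \in targets _ q)) => [/q_far /=|_]; first lia.
by rewrite orbF => ->; lia.
Qed.

Lemma count_fills_dup n A p u v w : profile p u v ->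
  (Posz (size p).+2 + w)%R = Posz (size p + v) ->
  count (fun q => fills n (rcons p w ++ q)) A = 0.
Proof.
move=> G t_dup; rewrite (eq_in_count (a2 := pred0)) ?count_pred0 // => q _ /=.
apply/negP => /perm_uniq; rewrite uniq_window covered_cat cat_uniq covered_rcons rcons_uniq.
by rewrite (perm_mem G) mem_cat t_dup !inE eqxx !orbT.
Qed.

Lemma count_fills_gap n A p u v w : profile p u.+1 v.+1 -> (-2 < w)%R ->
  {in A, forall q, all (fun w => -2 <= w)%R q} ->
  count (fun q => fills n (rcons p w ++ q)) A = 0.
Proof.
move=> G w_gt A_ge; rewrite (eq_in_count (a2 := pred0)) ?count_pred0 // => q qA /=.
apply/negP => F; have := @fills_cat_mem n (rcons p w) q (Posz (size p)) F (A_ge q qA).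
rewrite size_rcons covered_rcons mem_rcons inE (perm_mem G) mem_cat mem_window !inE.
lia.
Qed.

Lemma count_fills_rcons n W k p :
  count (fun q => fills n (p ++ q)) (words W k.+1)
  = \sum_(w <- W) count (fun q => fills n (rcons p w ++ q)) (words W k).
Proof. by rewrite count_wordsS; apply: eq_bigr => w _; apply: eq_count => q; rewrite cat_rcons. Qed.

Section Transfer.

Variables m n : nat.

Definition transfers k := forall p u v, size p + k = n -> u != v -> profile p u v ->
  count (fun q => fills n (p ++ q)) (words (shifts m) k) = nfill m k u v.

Lemma transfers0 : transfers 0.
Proof.
move=> p u v; rewrite addn0 => <- _ G /=; rewrite cats0 addn0 /fills (permPl G).
rewrite !window_S -!cats1 -!catA perm_cat2l /= perm_eq2 !eqz_nat.
by congr (nat_of_bool _); apply/idP/idP; lia.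
Qed.

Lemma transfersS0_step k p v w u' : transfers k -> size p + k.+1 = n -> v != 0 ->
  profile p 0 v -> (w + 1)%R = Posz u' ->
  count (fun q => fills n (rcons p w ++ q)) (words (shifts m) k)
  = if v != u'.+1 then nfill m k u' v.-1 else 0.
Proof.
move=> IH sz v0 G w_u'; case: eqVneq => [vu | vu] /=.
  by apply: count_fills_dup G _; lia.
apply: IH; [by rewrite size_rcons; lia | lia | by apply: profile_rcons0 G _ w_u'; rewrite lt0n].
Qed.

Lemma transfersS0 k : transfers k -> forall p v, size p + k.+1 = n -> v != 0 ->
  profile p 0 v ->
  count (fun q => fills n (p ++ q)) (words (shifts m) k.+1) = nfill m k.+1 0 v.
Proof.
move=> IH p v sz v0 G; rewrite count_fills_rcons !big_cons big_nil addn0 /=.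
rewrite (count_fills_dup _ _ (profileC G)) ?add0n; last by lia.
rewrite (transfersS0_step (u' := m) IH sz v0 G); last by lia.
by rewrite (transfersS0_step (u' := m.+1) IH sz v0 G) //; lia.
Qed.

Lemma transfersS k : transfers k -> transfers k.+1.
Proof.
move=> IH p u v sz uv G.
case: (eqVneq u 0) => [u0 | u0]; first by subst u; apply: transfersS0; rewrite // eq_sym.
case: (eqVneq v 0) => [v0 | v0].
  by subst v; rewrite nfillC; apply: transfersS0 => //; exact: profileC.
case: u u0 uv G => // u _; case: v v0 => // v _ uv G.
rewrite count_fills_rcons !big_cons big_nil addn0 /=.
rewrite (IH _ u v) ?size_rcons ?profile_rcons_fill //; last by lia.
by rewrite !(count_fills_gap _ G) ?addn0 //; try lia; exact: words_ge (shifts_ge m).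
Qed.

Lemma count_fills_words k : transfers k.
Proof. by elim: k => [|k IH]; [exact: transfers0 | exact: transfersS]. Qed.

End Transfer.

Definition disp n (s : 'S_n) : seq int := [seq (Posz (s i) - Posz i)%R | i <- enum 'I_n].

Lemma size_disp n (s : 'S_n) : size (disp s) = n.
Proof. by rewrite size_map size_enum_ord. Qed.

Lemma nth_disp n (s : 'S_n) (i : 'I_n) : nth 0%R (disp s) i = (Posz (s i) - Posz i)%R.
Proof. by rewrite (nth_map i) ?size_enum_ord // nth_ord_enum. Qed.

Lemma disp_inj n : injective (@disp n).
Proof.
move=> s t st; apply/permP => i; apply/val_inj.
by have /eqP := congr1 (nth 0%R ^~ i) st; rewrite !nth_disp (inj_eq (addIr _)) eqz_nat => /eqP.
Qed.

Lemma fills_disp n (s : 'S_n) : fills n (disp s).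
Proof.
rewrite fillsE /disp (targets_map (fun i => Posz (s i))); last by rewrite val_enum_ord size_enum_ord.
have -> : window n = [seq Posz (val i) | i <- enum 'I_n].
  by rewrite /window -val_enum_ord -map_comp.
have -> : [seq Posz (s i) | i <- enum 'I_n] = [seq Posz (val i) | i <- map s (enum 'I_n)].
  by rewrite -[RHS]map_comp.
exact/perm_map/perm_map_enum.
Qed.

Lemma disp_surj n ws : size ws = n -> fills n ws -> exists s : 'S_n, disp s = ws.
Proof.
rewrite fillsE => sz F; set t := targets 0 ws.
have t_uniq : uniq t by rewrite (perm_uniq F) uniq_window.
have t_size : size t = n by rewrite size_targets.
pose g (i : 'I_n) := insubd i `|nth 0%R t i|%N.
have gE i : Posz (g i) = nth 0%R t i.
  have := perm_mem F (nth 0%R t i); rewrite mem_nth ?t_size // mem_window => /esym t_in.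
  by rewrite /g val_insubd; case: ifP; lia.
have g_inj : injective g.
  move=> i j /(congr1 (fun k : 'I_n => Posz k)); rewrite !gE => /eqP.
  by rewrite nth_uniq ?t_size // => /eqP/val_inj.
exists (perm g_inj); apply: (@eq_from_nth _ 0%R) => [|k]; rewrite size_disp // => k_lt.
by rewrite (nth_disp _ (Ordinal k_lt)) permE gE nth_targets ?sz //=; lia.
Qed.

Lemma Pperm_count W n : uniq W -> Pperm W n = count (fills n) (words W n).
Proof.
move=> W_uniq; rewrite /Pperm -size_filter cardE -(size_map (@disp n)).
apply/perm_size/uniq_perm.
- by rewrite map_inj_uniq ?enum_uniq //; exact: disp_inj.
- by rewrite filter_uniq ?uniq_words.
move=> ws; rewrite mem_filter mem_words; apply/mapP/idP => [[s]|/and3P[ws_fills /eqP sz ws_W]].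
  rewrite mem_enum inE => /forallP s_W ->; rewrite fills_disp size_disp eqxx /=.
  by apply/allP => _ /mapP[i _ ->]; exact: s_W.
have [s s_ws] := disp_surj sz ws_fills; exists s => //.
rewrite mem_enum inE; apply/forallP => i; rewrite -nth_disp s_ws.
by apply: (allP ws_W); rewrite mem_nth // sz.
Qed.

Lemma Pperm_nfill m L : Pperm (shifts m) L = nfill m L 0 1.
Proof.
rewrite Pperm_count; first exact: (@count_fills_words m L L [::]).
by rewrite /= !inE; lia.
Qed.

Theorem mainTheorem10 (m n : nat) : (1 <= m)%N ->
  (sseq m.+1 m.+2 ((Posz n))) ^ 2 =
    (n == 0%N) + (sseq m.+1 m.+2 ((Posz n) - (Posz (m.+1)))%R) ^ 2
      + (sseq m.+1 m.+2 ((Posz n) - (Posz (m.+2)))%R) ^ 2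
      + 2 * \sum_(2 * m + 3 <= l < n.+1)
              Pperm [:: (-2)%R; ((Posz m) - 1)%R; (Posz m)] (l - (2 * m + 3))
              * (sseq m.+1 m.+2 (Posz (n - l))) ^ 2.
Proof.
move=> m_gt0; rewrite -/(sd m n m.+1) -/(sd m n m.+2) -[Posz n]subr0 -/(sd m n 0).
under eq_big_nat => l /andP[_ l_le] do
  rewrite Pperm_nfill -[Posz (n - l)]subzn // -/(sd m n l).
case: n => [|N].
  by rewrite big_geq ?(@sd_gt m 0 m.+1) ?(@sd_gt m 0 m.+2) ?addn3 // /sd subr0.
by rewrite sd_succ !sdSS sqrnD (sd_mul_sd_succ _ m_gt0) add0n.
Qed.
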